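(* Let $R$ be a pmp equivalence relation and $F\subseteq\llbracket R\rrbracket$ finite. For every $\kappa>0$ there is $\varepsilon>0$ such that $s(F,n)\leq s_\varepsilon(F,n)+\kappa$ for all $n\in\mathbb N$. The same holds with $\underline s$ in place of $s$ (both sides), and with $s_\omega$ in place of $s$ for any nonprincipal ultrafilter $\omega$.
   Context: Let $(X,\mu)$ be a standard probability space and $R$ a pmp countable Borel equivalence relation. $\llbracket R\rrbracket$ denotes the set of partial measure-preserving Borel bijections between Borel subsets of $X$ with graph contained in $R$, modulo null sets, with composition, inverses and identity $1$. Pairwise orthogonal elements (pairwise disjoint domains and ranges) have a sum; $\mathbf\Sigma F$ is the set of finite sums of pairwise orthogonal elements of $F$; $F_\pm=F\cup\{s^{-1}:s\in F\}\cup\{1\}$; $F_\pm^n$ the products of $n$ elements of $F_\pm$. $|s-t|=\mu\{x\in\operatorname{dom}s\cup\operatorname{dom}t:s(x)\neq t(x)\}$ (with $s(x)\neq t(x)$ on $\operatorname{dom}s\triangle\operatorname{dom}t$), $\tau(s)=\mu\{x\in\operatorname{dom}s:s(x)=x\}$. $\llbracket d\rrbracket$: partial permutations of $\{1,\dots,d\}$ with uniform measure, same distance, trace $\operatorname{tr}$. ${\rm SA}(F,n,\delta,d)$ is the set of maps $\varphi:\llbracket R\rrbracket\to\llbracket d\rrbracket$ with $\varphi(1)=1$ such that $|\varphi(st)-\varphi(s)\varphi(t)|<\delta$ for all $s,t\in\mathbf\Sigma F_\pm^n$ with $st\in\mathbf\Sigma F_\pm^n$, and $|\operatorname{tr}(\varphi(s))-\tau(s)|<\delta$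 for all $s\in\mathbf\Sigma F_\pm^n$. For maps $\varphi,\psi$ put $|\varphi-\psi|_F=\max_{s\in F}|\varphi(s)-\psi(s)|$, and for $\varepsilon\ge0$ let $N_\varepsilon(S)$ be the minimal number of closed $|\cdot|_F$-balls of radius $\varepsilon$ covering a set $S$ of maps (so $N_0({\rm SA}(F,n,\delta,d))={\rm NSA}(F,n,\delta,d)$, the number of distinct restrictions to $F$). Define $s_\varepsilon(F,n,\delta)=\limsup_{d\to\infty}\frac{1}{d\log d}\log N_\varepsilon({\rm SA}(F,n,\delta,d))$ ($\log0=-\infty$), $s_\varepsilon(F,n)=\inf_{\delta>0}s_\varepsilon(F,n,\delta)$, $s_\varepsilon(F)=\inf_n s_\varepsilon(F,n)$; $s(F,n),s(F)$ are the case $\varepsilon=0$. The versions $\underline s$ use $\liminf_d$ and $s_\omega$ use $\lim_{d\to\omega}$. *)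

From HB Require Import structures.
From mathcomp Require Import all_boot all_order all_algebra.
From mathcomp Require Import all_classical all_reals all_analysis.
Set Implicit Arguments. Unset Strict Implicit. Unset Printing Implicit Defensive.
Import Order.TTheory GRing.Theory Num.Theory.
Local Open Scope classical_set_scope.
Local Open Scope ring_scope.

(* Standard Borel space: Borel isomorphic to a Borel subset of the reals
   (Kuratowski's characterization).  The measurable sets of X play the role
   of its Borel sets. *)
Definition standard_borel (R : realType) (dX : measure_display)
  (X : measurableType dX) : Prop :=
  exists (B : set R) (f : X -> R) (g : R -> X),
    measurable B /\ measurable_fun setT f /\ measurable_fun B g /\
    f @` setT = B /\ (forall x, g (f x) = x) /\ (forall y, B y -> f (g y) = y).

Definition cber (dX : measure_display) (X : measurableType dX)
  (E : set (X * X)) : Prop :=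
  measurable E /\ (forall x, E (x, x)) /\ (forall x y, E (x, y) -> E (y, x)) /\
  (forall x y z, E (x, y) -> E (y, z) -> E (x, z)) /\
  (forall x, countable [set y | E (x, y)]).

Definition pmp (R : realType) (dX : measure_display) (X : measurableType dX)
  (mu : probability X R) (E : set (X * X)) : Prop :=
  forall (A : set X) (f : X -> X), measurable A -> measurable_fun A f ->
    set_inj A f -> (forall x, A x -> E (x, f x)) -> measurable (f @` A) ->
    mu (f @` A) = mu A.

Section FullPseudogroup.
Variables (R : realType) (dX : measure_display) (X : measurableType dX).
Variables (mu : probability X R) (E : set (X * X)).

(* raw partial maps: a domain and a function (only its values on the domain matter) *)
Definition praw := (set X * (X -> X))%type.

Definition is_pbij (r : praw) : Prop :=
  [/\ measurable r.1, measurable_fun r.1 r.2 & set_inj r.1 r.2] /\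
  [/\ (forall B, measurable B -> B `<=` r.1 -> measurable (r.2 @` B)),
    (forall B, measurable B -> B `<=` r.1 -> mu (r.2 @` B) = mu B) &
    (forall x, r.1 x -> E (x, r.2 x))].

(* representatives of elements of [[R]] *)
Record pbij := PBij { praw_of : praw ; pbijP : is_pbij praw_of }.

Definition rdom (r : praw) : set X := r.1.
Definition rran (r : praw) : set X := r.2 @` r.1.

Definition rdiff (r1 r2 : praw) : set X :=
  [set x | (r1.1 x /\ ~ r2.1 x) \/ (r2.1 x /\ ~ r1.1 x) \/
           (r1.1 x /\ r2.1 x /\ r1.2 x <> r2.2 x)].

Definition req (r1 r2 : praw) : Prop :=
  exists N, [/\ measurable N, mu N = 0%E & rdiff r1 r2 `<=` N].

Definition rid : praw := (setT, id).
Definition rcomp (s t : praw) : praw :=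
  ([set x | t.1 x /\ s.1 (t.2 x)], s.2 \o t.2).
Definition is_inv (r s : praw) : Prop :=
  r.1 = s.2 @` s.1 /\ (forall x, s.1 x -> r.2 (s.2 x) = x).
Definition rprod (l : seq praw) : praw := foldr rcomp rid l.
Fixpoint glue (l : seq praw) : praw :=
  match l with
  | [::] => (set0, id)
  | r :: l' => (r.1 `|` (glue l').1,
                fun x => if `[< r.1 x >] then r.2 x else (glue l').2 x)
  end.

Fixpoint inseq (T : Type) (x : T) (l : seq T) : Prop :=
  match l with [::] => False | y :: l' => y = x \/ inseq x l' end.

Definition inFpm (F : seq pbij) (r : praw) : Prop :=
  (exists2 s, inseq s F & r = praw_of s) \/
  (exists2 s, inseq s F & is_inv r (praw_of s)) \/ r = rid.

Definition inFpmn (F : seq pbij) (n : nat) (r : praw) : Prop :=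
  exists l : seq praw, [/\ size l = n, (forall i, (i < n)%N -> inFpm F (nth rid l i))
                         & req r (rprod l)].

(* t represents an element of Sigma F_pm^n: a finite sum of pairwise
   orthogonal elements of F_pm^n *)
Definition inSigma (F : seq pbij) (n : nat) (t : pbij) : Prop :=
  exists l : seq praw,
    [/\ (forall i, (i < size l)%N -> inFpmn F n (nth rid l i)),
        (forall i j, (i < size l)%N -> (j < size l)%N -> i <> j ->
           rdom (nth rid l i) `&` rdom (nth rid l j) = set0 /\
           rran (nth rid l i) `&` rran (nth rid l j) = set0)
      & req (praw_of t) (glue l)].

Definition tau (s : pbij) : R :=
  fine (mu [set x | (praw_of s).1 x /\ (praw_of s).2 x = x]).

End FullPseudogroup.

Section PPerm.
Variable d : nat.
Definition pinjb (f : {ffun 'I_d -> option 'I_d}) : bool :=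
  [forall i, forall j, (f i != None) && (f i == f j) ==> (i == j)].
Definition pperm := {f : {ffun 'I_d -> option 'I_d} | pinjb f}.
Definition ppid : {ffun 'I_d -> option 'I_d} := [ffun i => Some i].
Definition ppcomp (a b : {ffun 'I_d -> option 'I_d}) : {ffun 'I_d -> option 'I_d} :=
  [ffun i => obind (fun j => a j) (b i)].
Definition ppdist {R : realType} (a b : {ffun 'I_d -> option 'I_d}) : R :=
  (#|[set i | a i != b i]|%:R / d%:R).
Definition pptr {R : realType} (a : {ffun 'I_d -> option 'I_d}) : R :=
  (#|[set i | a i == Some i]|%:R / d%:R).
End PPerm.

Section Entropy.
Variables (R : realType) (dX : measure_display) (X : measurableType dX).
Variables (mu : probability X R) (E : set (X * X)).
Local Notation pbij := (pbij mu E).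

Definition SA (F : seq pbij) (n : nat) (delta : R) (d : nat) : set (pbij -> pperm d) :=
  [set phi |
    [/\ (forall s t : pbij, req mu (praw_of s) (praw_of t) -> phi s = phi t),
        (forall s : pbij, req mu (praw_of s) (rid X) -> val (phi s) = ppid d),
        (forall s t u : pbij, inSigma F n s -> inSigma F n t -> inSigma F n u ->
           req mu (praw_of u) (rcomp (praw_of s) (praw_of t)) ->
           ppdist (val (phi u)) (ppcomp (val (phi s)) (val (phi t))) < delta) &
        (forall s : pbij, inSigma F n s ->
           `|pptr (val (phi s)) - tau s| < delta)]].

Definition distF (F : seq pbij) (d : nat) (phi psi : pbij -> pperm d) : R :=
  \big[Num.max/0]_(s <- F) ppdist (val (phi s)) (val (psi s)).

Definition covers (F : seq pbij) (d : nat) (eps : R) (S : set (pbij -> pperm d))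
  (k : nat) : Prop :=
  exists c : 'I_k -> (pbij -> pperm d),
    S `<=` [set phi | exists i, distF F phi (c i) <= eps].

Definition Ncov (F : seq pbij) (d : nat) (eps : R) (S : set (pbij -> pperm d)) : \bar R :=
  ereal_inf [set ((k%:R)%:E : \bar R) | k in covers F eps S].

Definition elog (x : \bar R) : \bar R :=
  match x with
  | EFin r => if r == 0 then -oo%E else (ln r)%:E
  | x => x
  end.

Definition entseq (F : seq pbij) (eps : R) (n : nat) (delta : R) : nat -> \bar R :=
  fun d => (elog (Ncov F eps (SA F n delta (d:=d))) * ((d%:R * ln d%:R)^-1)%:E)%E.

Definition s_sup (F : seq pbij) (eps : R) (n : nat) : \bar R :=
  ereal_inf [set limn_esup (entseq F eps n delta) | delta in [set delta : R | 0 < delta]].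
Definition s_inf (F : seq pbij) (eps : R) (n : nat) : \bar R :=
  ereal_inf [set limn_einf (entseq F eps n delta) | delta in [set delta : R | 0 < delta]].
Definition s_ultra (omega : set_system nat) (F : seq pbij) (eps : R) (n : nat) : \bar R :=
  ereal_inf [set lim (entseq F eps n delta @ omega) | delta in [set delta : R | 0 < delta]].

End Entropy.

Definition nonprincipal (omega : set_system nat) : Prop :=
  forall m : nat, ~ omega [set m].

From HB Require Import structures.
From mathcomp Require Import all_boot all_order all_algebra.
From mathcomp Require Import all_classical all_reals all_analysis.
From mathcomp Require Import zify ring lra.
Import Order.TTheory GRing.Theory Num.Theory.
Set Implicit Arguments. Unset Strict Implicit. Unset Printing Implicit Defensive.
Local Open Scope ring_scope.

(* By definition N_0(SA) counts the distinct restrictions phi|_F.  Inside a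
   |.|_F-ball of radius eps, each of the |F| coordinates of phi|_F lies in a
   Hamming ball of radius r = floor(eps d) around the centre's, and such a ball
   of partial maps of {1..d} has at most (1 + d(d+1))^r <= d^(3r) elements.
   Hence N_0 <= N_eps d^(3 eps d |F|): after dividing logarithms by d log d the
   two entropy sequences differ by at most 3 eps |F| for every n, delta and
   d >= 2.  This survives limsup, liminf, ultralimits along a nonprincipal
   ultrafilter (which contains all cofinite sets) and the infimum over delta,
   so eps = kappa / (3|F| + 1) works. *)

Section HammingBall.
Variables (A B : finType).
Implicit Types f g : {ffun A -> B}.

Definition hamming f g : nat := #|[set i | f i != g i]|.
Definition hball f r : {set {ffun A -> B}} := [set g | (hamming g f <= r)%N].

(* A function of the ball of radius r around f is determined by the list of
   its at most r disagreements with f, padded with None to length r. *)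
Definition diff_list f g : seq (option (A * B)) :=
  [seq Some (i, g i) | i <- enum [set i | g i != f i]].
Definition hcode f r g : {ffun 'I_r -> option (A * B)} :=
  [ffun j : 'I_r => nth None (diff_list f g) j].

Lemma size_diff_list f g : size (diff_list f g) = hamming g f.
Proof. by rewrite size_map -cardE. Qed.

Lemma mem_diff_list f g i y :
  (Some (i, y) \in diff_list f g) = (g i != f i) && (y == g i).
Proof.
apply/mapP/andP => [[k]|[h /eqP ->]]; last by exists i; rewrite ?mem_enum ?inE.
by rewrite mem_enum inE => hk [-> ->].
Qed.

Lemma mem_hcode f r g p : (hamming g f <= r)%N ->
  (Some p \in diff_list f g) = [exists j, hcode f r g j == Some p].
Proof.
move=> le_gr; apply/idP/existsP => [p_in|[j /eqP]].
  have lt_pr : (index (Some p) (diff_list f g) < r)%N.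
    by apply: leq_trans le_gr; rewrite -size_diff_list index_mem.
  by exists (Ordinal lt_pr); rewrite ffunE /= nth_index.
rewrite ffunE => jp; rewrite -jp mem_nth // ltnNge; apply/negP.
by move=> /(nth_default None); rewrite jp.
Qed.

Lemma hcode_inj f r : {in hball f r &, injective (hcode f r)}.
Proof.
move=> g1 g2; rewrite !inE => le1 le2 eq12.
have same_diff i y :
    (Some (i, y) \in diff_list f g1) = (Some (i, y) \in diff_list f g2).
  by rewrite (mem_hcode _ le1) (mem_hcode _ le2) eq12.
apply/ffunP => i; have := same_diff i (g1 i); have := same_diff i (g2 i).
rewrite !mem_diff_list !eqxx !andbT.
by case: (eqVneq (g1 i) (f i)) => [->|_]; case: (eqVneq (g2 i) (f i)) => [->|_] //= /eqP.
Qed.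

Lemma card_hball f r : (#|hball f r| <= (1 + #|A| * #|B|) ^ r)%N.
Proof.
rewrite -(card_in_imset (@hcode_inj f r)); apply: leq_trans (max_card _) _.
by rewrite card_ffun card_option card_prod card_ord add1n.
Qed.

Lemma card_family_hball (J : finType) (c : J -> {ffun A -> B}) r :
  (#|family (fun j => hball (c j) r)| <= ((1 + #|A| * #|B|) ^ r) ^ #|J|)%N.
Proof.
rewrite card_family [#|J|]cardE /image_mem; elim: (enum J) => //= j s IH.
by rewrite expnS leq_mul ?card_hball.
Qed.
End HammingBall.

Section Restriction.
Variables (R : realType) (dX : measure_display) (X : measurableType dX).
Variables (mu : probability X R) (E : set (X * X)) (F : seq (pbij mu E)) (d : nat).
Local Notation pb := (pbij mu E).
Local Notation pmap := {ffun 'I_d -> option 'I_d}.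

Definition restrF (phi : pb -> pperm d) : {ffun 'I_(size F) -> pmap} :=
  [ffun j => val (phi (tnth (in_tuple F) j))].

Lemma ppdistE (a b : pmap) : ppdist a b = (hamming a b)%:R / d%:R :> R.
Proof.
congr (_%:R / _); apply: eq_card => i.
by rewrite unfold_in /= inE; exact/asboolP/idP.
Qed.

Lemma distF_restrF (phi psi : pb -> pperm d) : distF F phi psi =
  \big[Num.max/0]_(j < size F) ppdist (restrF phi j) (restrF psi j).
Proof. by rewrite /distF big_tnth; apply: eq_bigr => j _; rewrite !ffunE. Qed.

Lemma distF_ge0 (phi psi : pb -> pperm d) : 0 <= distF F phi psi.
Proof. exact: bigmax_ge_id. Qed.

Lemma eq_restrF_distF0 (phi psi : pb -> pperm d) :
  restrF phi = restrF psi -> distF F phi psi = 0.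
Proof.
move=> eq_restr; apply/eqP; rewrite eq_le distF_ge0 andbT distF_restrF.
apply: bigmax_le => // j _; rewrite eq_restr ppdistE /hamming.
by rewrite eq_card0 ?mul0r // => i; rewrite inE eqxx.
Qed.

Lemma distF_restrF_family (eps : R) (r : nat) (phi psi : pb -> pperm d) :
  (0 < d)%N -> eps * d%:R < r.+1%:R -> distF F phi psi <= eps ->
  restrF phi \in family (fun j => hball (restrF psi j) r).
Proof.
move=> d_gt0 eps_r; rewrite distF_restrF => le_eps.
apply/forallP => j; rewrite /= inE -ltnS -(ltr_nat R).
apply: le_lt_trans eps_r; rewrite -ler_pdivrMr ?ltr0n // -ppdistE.
by apply: le_trans le_eps; exact: (le_bigmax _ (fun j => ppdist _ _) j).
Qed.

Definition restrF_set (S : set (pb -> pperm d)) : {set {ffun 'I_(size F) -> pmap}} :=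
  [set k | `[< exists2 phi, S phi & restrF phi = k >]].

Lemma covers_restrF_set (eps : R) (S : set (pb -> pperm d)) :
  0 <= eps -> covers F eps S #|restrF_set S|.
Proof.
move=> eps_ge0.
have center (j : 'I_#|restrF_set S|) : exists2 phi, S phi & restrF phi = enum_val j.
  by have := enum_valP j; rewrite inE => /asboolP.
exists (fun j => projT1 (cid2 (center j))) => phi Sphi.
have phiS : restrF phi \in restrF_set S by rewrite inE; apply/asboolP; exists phi.
exists (enum_rank_in phiS (restrF phi)).
by case: cid2 => psi _ /=; rewrite enum_rankK_in // => /esym/eq_restrF_distF0 ->.
Qed.

Lemma Ncov_min (eps : R) (S : set (pb -> pperm d)) : 0 <= eps ->
  exists k, [/\ covers F eps S k, Ncov F eps S = k%:R%:E &
                forall k', covers F eps S k' -> (k <= k')%N].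
Proof.
move=> eps_ge0; have ex_cover : exists k, `[< covers F eps S k >].
  by exists #|restrF_set S|; apply/asboolP/covers_restrF_set.
exists (ex_minn ex_cover); case: ex_minnP => k /asboolP cover_k min_k.
have {}min_k k' : covers F eps S k' -> (k <= k')%N by move=> /asboolP/min_k.
split=> //; apply/eqP; rewrite eq_le; apply/andP; split.
  by apply: ereal_inf_lbound; exists k.
by apply: le_ereal_inf_tmp => _ [k' /min_k le_kk' <-]; rewrite lee_fin ler_nat.
Qed.

Lemma Ncov0_le (eps : R) (r : nat) (S : set (pb -> pperm d)) :
  0 <= eps -> (0 < d)%N -> eps * d%:R < r.+1%:R ->
  exists k0 k1, [/\ Ncov F 0 S = k0%:R%:E, Ncov F eps S = k1%:R%:E &
                   (k0 <= k1 * ((1 + d * d.+1) ^ r) ^ size F)%N].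
Proof.
move=> eps_ge0 d_gt0 eps_r.
have [k0 [_ N0 min_k0]] := Ncov_min S (lexx 0).
have [k1 [[c cover_c] N1 _]] := Ncov_min S eps_ge0.
exists k0, k1; split => //.
apply: leq_trans (min_k0 _ (covers_restrF_set S (lexx 0))) _.
pose balls := \bigcup_(i < k1) [set K in family (fun j => hball (restrF (c i) j) r)].
have sub_balls : restrF_set S \subset balls.
  apply/fintype.subsetP => K; rewrite inE => /asboolP[phi /cover_c[i le_eps] <-].
  by apply/bigcupP; exists i; rewrite // inE; exact: distF_restrF_family le_eps.
apply: leq_trans (subset_leq_card sub_balls) _.
apply: leq_trans (unstable.card_big_setU _ _ _) _.
rewrite -[k1 in (_ <= k1 * _)%N]card_ord -sum_nat_const leq_sum // => i _.
have := card_family_hball (restrF (c i)) r.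
by rewrite cardsE card_option !card_ord.
Qed.

End Restriction.

Lemma ball_size_le (d r m : nat) : (2 <= d)%N ->
  (((1 + d * d.+1) ^ r) ^ m <= d ^ (3 * r * m))%N.
Proof.
move=> d_ge2; rewrite -expnM -mulnA (expnM d 3).
have [->|rm_gt0] := posnP (r * m); first by rewrite !expn0.
rewrite leq_exp2r // !expnS expn0 muln1; nia.
Qed.

Section LogBound.
Variable R : realType.
Local Open Scope ereal_scope.

Lemma elog_nat_le (k0 k1 d n : nat) : (2 <= d)%N -> (k0 <= k1 * d ^ n)%N ->
  elog (k0%:R%:E) * ((d%:R * ln d%:R)^-1)%:E <=
  elog (k1%:R%:E) * ((d%:R * ln d%:R)^-1)%:E + (n%:R / d%:R)%:E :> \bar R.
Proof.
move=> d_ge2 k0_le.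
have d_gt0 : (0 < d%:R :> R)%R by rewrite ltr0n (leq_trans _ d_ge2).
have lnd_gt0 : (0 < ln d%:R :> R)%R by rewrite ln_gt0 // ltr1n.
have c_gt0 : (0 < (d%:R * ln d%:R)^-1 :> R)%R by rewrite invr_gt0 mulr_gt0.
have [->|k0_gt0] := posnP k0; first by rewrite /= eqxx gt0_mulNye ?lte_fin ?leNye.
have k1_gt0 : (0 < k1)%N.
  by rewrite lt0n; apply: contraTneq k0_le => ->; rewrite mul0n -ltnNge.
rewrite /elog !pnatr_eq0 (gtn_eqF k0_gt0) (gtn_eqF k1_gt0) -!EFinM -EFinD lee_fin.
have ln_le : (ln k0%:R <= ln k1%:R + ln d%:R *+ n :> R)%R.
  have dn_gt0 : (0 < d%:R ^+ n :> R)%R by rewrite exprn_gt0.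
  rewrite -lnXn // -lnM ?posrE ?ltr0n // ler_ln ?posrE ?mulr_gt0 ?ltr0n //.
  by rewrite -(ler_nat R) natrM natrX in k0_le.
apply: le_trans (ler_wpM2r (ltW c_gt0) ln_le) _.
rewrite mulrDl lerD2l.
suff -> : (ln d%:R *+ n / (d%:R * ln d%:R) = n%:R / d%:R :> R)%R by [].
by rewrite -mulr_natl; field; rewrite mulr1 !gt_eqF.
Qed.
End LogBound.

Lemma entseq_shift (R : realType) (dX : measure_display) (X : measurableType dX)
  (mu : probability X R) (E : set (X * X)) (F : seq (pbij mu E))
  (eps kappa delta : R) (n d : nat) :
  (2 <= d)%N -> 0 <= eps -> 3 * eps * (size F)%:R <= kappa ->
  (entseq F 0 n delta d <= entseq F eps n delta d + kappa%:E)%E.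
Proof.
move=> d_ge2 eps_ge0 eps_kappa; have d_gt0 : (0 < d)%N := ltnW d_ge2.
have /andP[r_le r_lt] := truncn_itv (mulr_ge0 eps_ge0 (ler0n R d)).
set r := Num.truncn _ in r_le r_lt.
have [k0 [k1 [N0 N1 k01]]] := Ncov0_le F (SA F n delta (d:=d)) eps_ge0 d_gt0 r_lt.
have k0_le : (k0 <= k1 * d ^ (3 * r * size F))%N.
  by rewrite (leq_trans k01) // leq_mul2l ball_size_le ?orbT.
rewrite /entseq N0 N1; apply: le_trans (elog_nat_le R d_ge2 k0_le) _.
apply: leeD => //; rewrite lee_fin ler_pdivrMr ?ltr0n // !natrM.
have m_ge0 : 0 <= (size F)%:R :> R by [].
have d_ge0 : 0 <= d%:R :> R by [].
nra.
Qed.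

Local Open Scope classical_set_scope.

Section ShiftedLimits.
Variables (R : realType) (T : choiceType) (X : filteredType T).
Implicit Types (u v : X -> \bar R) (G : set_system X).
Local Open Scope ereal_scope.

Lemma leeN_shift (a b : \bar R) (k : R) : (- a <= - b + k%:E) = (b <= a + k%:E).
Proof.
by case: a b => [a| |] [b| |]; rewrite //= -?EFinN -?EFinD ?lee_fin ?leNye ?leey //; lra.
Qed.

Lemma limf_esup_le_shift G u v (k : R) : Filter G ->
  (\forall x \near G, u x <= v x + k%:E) -> limf_esup u G <= limf_esup v G + k%:E.
Proof.
move=> FG uv_near; rewrite !limf_esupE -leeBlDr //.
apply: le_ereal_inf_tmp => _ [V GV <-]; rewrite leeBlDr //.
pose W := V `&` [set x | u x <= v x + k%:E].
apply: le_trans (ereal_inf_lbound _) _; first by exists W => //; exact: filterI.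
apply: ge_ereal_sup => _ [x [Vx uvx] <-]; apply: le_trans uvx _.
by apply: leeD => //; apply: ereal_sup_ubound; exists x.
Qed.

Lemma limf_einf_le_shift G u v (k : R) : Filter G ->
  (\forall x \near G, u x <= v x + k%:E) -> limf_einf u G <= limf_einf v G + k%:E.
Proof.
move=> FG uv_near; rewrite /limf_einf leeN_shift.
by apply: (limf_esup_le_shift FG); apply: filterS uv_near => x; rewrite leeN_shift.
Qed.

Lemma ultra_cvg_limf_esup G u : UltraFilter G -> u @ G --> limf_esup u G.
Proof.
move=> UG.
have lt_near b : limf_esup u G < b -> \forall x \near G, u x < b.
  rewrite limf_esupE => /ereal_inf_lt[_ [V GV <-] supV_lt].
  apply: filterS GV => x Vx; apply: le_lt_trans supV_lt.
  by apply: ereal_sup_ubound; exists x.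
have gt_near a : a < limf_esup u G -> \forall x \near G, a < u x.
  move=> a_lt; have [//|GC] := in_ultra_setVsetC [set x | a < u x] UG.
  suff : limf_esup u G <= a by rewrite leNgt a_lt.
  rewrite limf_esupE.
  apply: le_trans (ereal_inf_lbound _) _; first by exists (~` [set x | a < u x]).
  by apply: ge_ereal_sup => _ [x /negP ux_le <-]; rewrite leNgt.
move: lt_near gt_near; case: (limf_esup u G) => [l| |] lt_near gt_near A /= Al.
- have /nbhs_ballP[e e_gt0 ball_A] : nbhs l (fun r => A r%:E) := Al.
  have l_e := gt_near (l - e)%:E; have le_ := lt_near (l + e)%:E.
  rewrite !lte_fin ltrBlDr ltrDl e_gt0 in l_e le_.
  apply: filterS (filterI (l_e erefl) (le_ erefl)) => x /=.
  case: (u x) => [y| |] [lt_y y_lt]; rewrite ?ltNye ?ltey //= in lt_y y_lt.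
  by apply: ball_A; rewrite /ball /= ltr_distlC -!lte_fin lt_y y_lt.
- have [M [_ MA]] := Al; exact: filterS MA (gt_near M%:E (ltry _)).
- have [M [_ MA]] := Al; exact: filterS MA (lt_near M%:E (ltNyr _)).
Qed.

End ShiftedLimits.

Lemma nonprincipal_ge (omega : set_system nat) (k : nat) :
  UltraFilter omega -> nonprincipal omega -> omega [set n | (k <= n)%N].
Proof.
move=> U np; elim: k => [|k IHk]; first by apply: filterS filterT.
have [/np//|omega_neq_k] := in_ultra_setVsetC [set k] U.
apply: filterS (filterI IHk omega_neq_k) => n /= [k_le /eqP].
by rewrite ltn_neqAle eq_sym => ->.
Qed.

Lemma ereal_inf_le_shift (R : realType) (T : Type) (P : set T)
  (f g : T -> \bar R) (k : R) :
  (forall x, P x -> f x <= g x + k%:E)%E ->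
  (ereal_inf (f @` P) <= ereal_inf (g @` P) + k%:E)%E.
Proof.
move=> fg; rewrite -leeBlDr //; apply: le_ereal_inf_tmp => _ [x Px <-].
by rewrite leeBlDr //; apply: le_trans (fg x Px); apply: ereal_inf_lbound; exists x.
Qed.

Theorem mainTheorem9 (R : realType) (dX : measure_display) (X : measurableType dX)
  (mu : probability X R) (E : set (X * X)) (F : seq (pbij mu E)) :
  standard_borel R X -> cber E -> pmp mu E ->
  [/\ (forall kappa : R, 0 < kappa -> exists2 eps : R, 0 < eps &
         forall n : nat, (s_sup F 0 n <= s_sup F eps n + kappa%:E)%E),
      (forall kappa : R, 0 < kappa -> exists2 eps : R, 0 < eps &
         forall n : nat, (s_inf F 0 n <= s_inf F eps n + kappa%:E)%E) &
      (forall omega : set_system nat, UltraFilter omega -> nonprincipal omega ->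
       forall kappa : R, 0 < kappa -> exists2 eps : R, 0 < eps &
         forall n : nat, (s_ultra omega F 0 n <= s_ultra omega F eps n + kappa%:E)%E)].
Proof.
move=> _ _ _.
have shift kappa : 0 < kappa -> exists2 eps : R, 0 < eps & forall n delta d,
    (2 <= d)%N -> (entseq F 0 n delta d <= entseq F eps n delta d + kappa%:E)%E.
  move=> kappa_gt0; have m_ge0 : 0 <= (size F)%:R :> R by [].
  have c_gt0 : 0 < 3 * (size F)%:R + 1 :> R by rewrite ltr_wpDl ?mulr_ge0.
  pose eps := kappa / (3 * (size F)%:R + 1).
  have eps_gt0 : 0 < eps by rewrite divr_gt0.
  have eps_c : eps * (3 * (size F)%:R + 1) = kappa by rewrite divfK ?gt_eqF.
  by exists eps => // n delta d d_ge2; apply: entseq_shift => //; [exact: ltW|nra].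
have inf_ge2 : \forall d \near \oo, (2 <= d)%N := nbhs_infty_ge 2.
split.
- move=> kappa /shift[eps eps_gt0 shift_eps]; exists eps => // n.
  apply: ereal_inf_le_shift => delta _; apply: limf_esup_le_shift.
  exact: filterS (shift_eps n delta) inf_ge2.
- move=> kappa /shift[eps eps_gt0 shift_eps]; exists eps => // n.
  apply: ereal_inf_le_shift => delta _; apply: limf_einf_le_shift.
  exact: filterS (shift_eps n delta) inf_ge2.
- move=> omega U np kappa /shift[eps eps_gt0 shift_eps]; exists eps => // n.
  apply: ereal_inf_le_shift => delta _.
  rewrite !(cvg_lim (@ereal_hausdorff R) (ultra_cvg_limf_esup U)).
  apply: limf_esup_le_shift.
  exact: filterS (shift_eps n delta) (nonprincipal_ge 2 U np).
Qed.
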